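(* Let $a=(a_1,\dots,a_n)$ be an inversion sequence and let $\sigma\in S_n$ be the unique permutation with $\mathrm{InvSeq}(\sigma)=a$. Then the number of cyclic parking functions $p\in\mathrm{CycPF}_n$ with displacement vector $\mathrm{disp}(p)=a$ equals the number of components of $\sigma$; in particular there is at least one such $p$.
   Context: An inversion sequence is a sequence $(a_1,\dots,a_n)$ of non-negative integers with $a_i<i$ for all $i$. For $\sigma\in S_n$ (one-line notation), $\mathrm{inv}_a(\sigma)$ is the number of $b<a$ appearing after $a$ in $\sigma$, and $\mathrm{InvSeq}(\sigma)=(\mathrm{inv}_1(\sigma),\dots,\mathrm{inv}_n(\sigma))$, a bijection from $S_n$ to inversion sequences of length $n$. A component of $\sigma$ is a contiguous block $\sigma_a\cdots\sigma_b$ with $\{\sigma_a,\dots,\sigma_b\}=\{a,\dots,b\}$, minimal for inclusion; each permutation decomposes uniquely into components. Classical parking process on $n$ spots for $p\in[n]^n$: cars $1,\dots,n$ enter in order; car $i$ parks in the first unoccupied spot $k\ge p_i$, failing if none. If all park, the outcome $\pi$ has $\pi_k$ = car in spot $k$, and $\mathrm{disp}(p)=(d_1,\dots,d_n)$ with $d_i=\pi^{-1}_i-p_i$. $\mathrm{CycPF}_n$ is the set of $p$ for which all cars park and the outcome is $i(i+1)\cdots n\,12\cdots(i-1)$ for some $i\in[n]$. *)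

(* Conventions: everything is 0-indexed (spots, cars and
   values of permutations live in 'I_n = {0,...,n-1}). *)
From mathcomp Require Import all_boot all_fingroup.

Set Implicit Arguments.
Unset Strict Implicit.
Unset Printing Implicit Defensive.

Local Open Scope group_scope.

(* a_i < i in 1-indexed form, i.e. a_i <= i for 0-indexed i. *)
Definition is_invseq (n : nat) (a : {ffun 'I_n -> nat}) : Prop :=
  forall i : 'I_n, a i <= i.

(* sigma is read in one-line notation: position j carries value sigma j.
   inv_v(sigma) = number of values b < v appearing after v, i.e. at a
   position j > sigma^-1 v. *)
Definition inv_at (n : nat) (sigma : {perm 'I_n}) (v : 'I_n) : nat :=
  #|[set j : 'I_n | (sigma^-1 v < j)%N && (sigma j < v)%N]|.

Definition InvSeq (n : nat) (sigma : {perm 'I_n}) : {ffun 'I_n -> nat} :=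
  [ffun v => inv_at sigma v].

Definition interval (n : nat) (x y : nat) : {set 'I_n} :=
  [set i : 'I_n | (x <= i <= y)%N].

Definition closed_block (n : nat) (sigma : {perm 'I_n}) (x y : nat) : bool :=
  (x <= y)%N && (sigma @: interval n x y == interval n x y).

(* A component is a block sigma_x ... sigma_y of the (unique) decomposition
   of sigma into consecutive closed blocks: it is closed, everything before
   it is closed (so it starts a block of the decomposition), and it is minimal,
   i.e. no shorter closed block x..k (k < y) starts at x. *)
Definition component (n : nat) (sigma : {perm 'I_n}) (x y : 'I_n) : bool :=
  [&& closed_block sigma x y,
      sigma @: [set i : 'I_n | (i < x)%N] == [set i : 'I_n | (i < x)%N] &
      [forall k : 'I_n, ((x <= k < y)%N) ==> ~~ closed_block sigma x k]].

Definition ncomponents (n : nat) (sigma : {perm 'I_n}) : nat :=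
  #|[set xy : 'I_n * 'I_n | component sigma xy.1 xy.2]|.

(* occupancy: spot k holds Some car or None *)
Definition first_free (occ : seq (option nat)) (s : nat) : option nat :=
  let k := find (fun k => (s <= k)%N && (nth None occ k == None))
                (iota 0 (size occ)) in
  if (k < size occ)%N then Some k else None.

Fixpoint park_aux (occ : seq (option nat)) (i : nat) (ps : seq nat)
  : option (seq (option nat)) :=
  match ps with
  | [::] => Some occ
  | q :: ps' =>
      match first_free occ q with
      | None => None
      | Some k => park_aux (set_nth None occ k (Some i)) i.+1 ps'
      end
  end.

(* preference p i = spot preferred by car i (0-indexed).  Result: None if
   some car fails to park, otherwise Some occ with occ`_k = Some (car in
   spot k), i.e. the outcome pi. *)
Definition park (n : nat) (p : {ffun 'I_n -> 'I_n}) : option (seq (option nat)) :=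
  park_aux (nseq n None) 0 [seq val (p i) | i <- enum 'I_n].

(* CycPF_n: all cars park and the outcome is  i (i+1) ... n 1 ... (i-1),
   i.e. (0-indexed) pi_k = (k + s) mod n for some s in {0,...,n-1}. *)
Definition cycPF (n : nat) (p : {ffun 'I_n -> 'I_n}) : bool :=
  match park p with
  | None => false
  | Some occ =>
      [exists s : 'I_n, occ == [seq Some ((k + s) %% n) | k <- iota 0 n]]
  end.

(* disp(p)_i = pi^{-1}_i - p_i (spot of car i minus its preference);
   only meaningful when all cars park (default 0 otherwise). *)
Definition disp (n : nat) (p : {ffun 'I_n -> 'I_n}) (i : 'I_n) : nat :=
  match park p with
  | None => 0
  | Some occ => index (Some (val i)) occ - p i
  end.

(* A cyclic parking function whose outcome is rotated by s puts car c in spot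
   (c - s) mod n, so its displacement vector a determines it: car c must prefer
   spot (c - s) mod n - a_c.  These preferences do produce that outcome exactly
   when a_c + s <= c for every car c >= s; the cars c < s wrap around and always
   find their spot.  For a = InvSeq sigma this condition on s says that sigma
   maps the prefix {0, ..., s-1} onto itself, and the s for which this holds are
   exactly the starting positions of the components of sigma. *)
From mathcomp Require Import all_boot all_fingroup.
From mathcomp Require Import zify.

Set Implicit Arguments.
Unset Strict Implicit.
Unset Printing Implicit Defensive.

Lemma find_first (T : Type) (P : pred T) (s : seq T) x0 k :
    k < size s -> P (nth x0 s k) -> (forall j, j < k -> ~~ P (nth x0 s j)) ->
  find P s = k.
Proof.
move=> ks Pk before_k; case: (ltngtP (find P s) k) => // [lt_fk|lt_kf].
- have /(nth_find x0) Pf : has P s by rewrite has_find (ltn_trans lt_fk ks).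
  by move: (before_k _ lt_fk); rewrite Pf.
- by move: (before_find x0 lt_kf); rewrite Pk.
Qed.

Lemma modn_double x n : x < n + n -> x %% n = if x < n then x else x - n.
Proof.
move=> xn; case: (ltnP x n) => h; first by rewrite modn_small.
by rewrite -{1}(subnK h) modnDr modn_small //; lia.
Qed.

Lemma card_ord_lt n c : c <= n -> #|[set v : 'I_n | v < c]| = c.
Proof.
elim: c => [|c IHc] cn.
  by apply/eqP; rewrite cards_eq0; apply/eqP/setP => v; rewrite !inE.
have -> : [set v : 'I_n | v < c.+1] = Ordinal cn |: [set v : 'I_n | v < c].
  by apply/setP => v; rewrite !inE ltnS leq_eqVlt -val_eqE.
by rewrite cardsU1 IHc ?(ltnW cn) // inE ltnn.
Qed.

Lemma first_free_Some occ q k : first_free occ q = Some k ->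
  [/\ k < size occ, q <= k & nth None occ k = None].
Proof.
rewrite /first_free; case: ifP => // found [<-].
have : has (fun k => (q <= k) && (nth None occ k == None)) (iota 0 (size occ)).
  by rewrite has_find size_iota.
by move/(nth_find 0); rewrite nth_iota // add0n => /andP[-> /eqP ->].
Qed.

Lemma first_free_eq_Some occ q k :
    k < size occ -> q <= k -> nth None occ k = None ->
    (forall j, q <= j < k -> nth None occ j <> None) ->
  first_free occ q = Some k.
Proof.
move=> ks qk free_k taken; rewrite /first_free (@find_first _ _ _ 0 k) ?ks //.
- by rewrite size_iota.
- by rewrite nth_iota // add0n qk free_k eqxx.
- move=> j jk; rewrite nth_iota ?add0n; last exact: ltn_trans ks.
  by apply/negP => /andP[qj /eqP]; apply: taken; rewrite qj jk.
Qed.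

Lemma park_aux_occupied occ i ps occ' : park_aux occ i ps = Some occ' ->
  forall k, nth None occ k <> None -> nth None occ' k = nth None occ k.
Proof.
elim: ps occ i => [|q ps IHps] occ i /=; first by case=> ->.
case E: (first_free occ q) => [k'|] // park_rest k taken_k.
have [_ _ free_k'] := first_free_Some E.
have keep_k : nth None (set_nth None occ k' (Some i)) k = nth None occ k.
  by rewrite nth_set_nth /=; case: eqP => // ek; rewrite ek free_k' in taken_k.
by rewrite (IHps _ _ park_rest k) keep_k.
Qed.

Definition prefs n (p : {ffun 'I_n -> 'I_n}) := [seq val (p i) | i <- enum 'I_n].

Lemma nth_prefs n (p : {ffun 'I_n -> 'I_n}) (j : 'I_n) : nth 0 (prefs p) j = p j.
Proof. by rewrite (nth_map j) ?size_enum_ord // nth_ord_enum. Qed.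

Lemma size_prefs n (p : {ffun 'I_n -> 'I_n}) : size (prefs p) = n.
Proof. by rewrite size_map size_enum_ord. Qed.

Section CyclicOutcome.
Variables (n s : nat).
Hypothesis lt_sn : s < n.

Definition cyc_outcome := [seq Some ((k + s) %% n) | k <- iota 0 n].

(* The occupancy of the spots once cars 0, ..., i-1 have parked. *)
Definition cyc_partial i :=
  [seq if (k + s) %% n < i then Some ((k + s) %% n) else None | k <- iota 0 n].

Definition cyc_spot c := (c + n - s) %% n.

Lemma size_cyc_outcome : size cyc_outcome = n.
Proof. by rewrite size_map size_iota. Qed.

Lemma size_cyc_partial i : size (cyc_partial i) = n.
Proof. by rewrite size_map size_iota. Qed.

Lemma nth_cyc_outcome k : k < n -> nth None cyc_outcome k = Some ((k + s) %% n).
Proof. by move=> kn; rewrite (nth_map 0) ?size_iota // nth_iota. Qed.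

Lemma nth_cyc_partial i k : k < n ->
  nth None (cyc_partial i) k = if (k + s) %% n < i then Some ((k + s) %% n) else None.
Proof. by move=> kn; rewrite (nth_map 0) ?size_iota // nth_iota. Qed.

Lemma cyc_partial0 : cyc_partial 0 = nseq n None.
Proof.
apply: (@eq_from_nth _ None); rewrite ?size_cyc_partial ?size_nseq // => k kn.
by rewrite nth_cyc_partial // nth_nseq kn.
Qed.

Lemma cyc_partial_n : cyc_partial n = cyc_outcome.
Proof.
apply: (@eq_from_nth _ None); rewrite ?size_cyc_partial ?size_cyc_outcome // => k kn.
by rewrite nth_cyc_partial // nth_cyc_outcome // ltn_pmod //; lia.
Qed.

Lemma cyc_spotE c : c < n -> cyc_spot c = if s <= c then c - s else c + n - s.
Proof.
move=> cn; rewrite /cyc_spot modn_double; last lia.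
by case: ifP; case: ifP; lia.
Qed.

Lemma cyc_spot_lt c : c < n -> cyc_spot c < n.
Proof. by move=> cn; rewrite cyc_spotE //; case: ifP; lia. Qed.

Lemma eq_cyc_spot c k : c < n -> k < n -> ((k + s) %% n == c) = (k == cyc_spot c).
Proof.
move=> cn kn; rewrite cyc_spotE // modn_double; last lia.
by case: ifP; case: ifP; lia.
Qed.

Lemma cyc_partialS i : i < n ->
  set_nth None (cyc_partial i) (cyc_spot i) (Some i) = cyc_partial i.+1.
Proof.
move=> i_n; have spot_i := cyc_spot_lt i_n.
apply: (@eq_from_nth _ None) => [|k].
  by rewrite size_set_nth !size_cyc_partial; lia.
rewrite size_set_nth size_cyc_partial => k_lt; have kn : k < n by lia.
rewrite nth_set_nth /= !nth_cyc_partial // -(eq_cyc_spot i_n kn).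
case: eqP => [-> | ne]; first by rewrite ltnSn.
by rewrite (_ : (k + s) %% n < i.+1 = ((k + s) %% n < i)) //; lia.
Qed.

Lemma index_cyc_outcome c : c < n -> index (Some c) cyc_outcome = cyc_spot c.
Proof.
move=> cn; have spot_c := cyc_spot_lt cn.
have -> : Some c = nth None cyc_outcome (cyc_spot c).
  by rewrite nth_cyc_outcome //; move: (eq_cyc_spot cn spot_c); rewrite eqxx => /eqP ->.
rewrite index_uniq ?size_cyc_outcome // map_inj_in_uniq ?iota_uniq //.
move=> x y; rewrite !mem_iota /= => xn yn [].
by rewrite !modn_double; try lia; case: ifP; case: ifP; lia.
Qed.

Lemma park_aux_cyc (p : {ffun 'I_n -> 'I_n}) i : i <= n ->
  park_aux (cyc_partial i) i (drop i (prefs p)) = Some cyc_outcome <->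
  (forall j : 'I_n, i <= j -> first_free (cyc_partial j) (p j) = Some (cyc_spot j)).
Proof.
move=> le_in; rewrite -(subKn le_in); move: (leq_subr i n).
elim: (n - i) => [|m IHm] le_mn.
  rewrite subn0 drop_oversize ?size_prefs //= cyc_partial_n.
  by split=> // _ j; rewrite leqNgt ltn_ord.
have lt_in : n - m.+1 < n by lia.
have succ_i : (n - m.+1).+1 = n - m by lia.
rewrite (drop_nth 0) ?size_prefs //= (nth_prefs p (Ordinal lt_in)) /=.
case E: first_free => [k|]; split=> [park_rest | spots] //; last first.
  by move: (spots (Ordinal lt_in) (leqnn _)); rewrite /= E.
- move: (spots (Ordinal lt_in) (leqnn _)); rewrite /= E => -[->].
  rewrite cyc_partialS // succ_i; apply/(IHm (ltnW le_mn)).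
  by move=> j ij; apply: spots; lia.
- have [kn _ free_k] := first_free_Some E; rewrite size_cyc_partial in kn.
  have := park_aux_occupied park_rest (k := k).
  rewrite nth_set_nth /= eqxx nth_cyc_outcome // => /(_ ltac:(done)) [].
  move/eqP; rewrite eq_cyc_spot // => /eqP ek; subst k.
  rewrite cyc_partialS // succ_i in park_rest.
  move/(IHm (ltnW le_mn)): park_rest => spots j.
  rewrite leq_eqVlt => /orP[/eqP ij | ltij]; last by apply: spots; lia.
  by rewrite (_ : j = Ordinal lt_in) //; apply: val_inj.
Qed.

Lemma park_cycE (p : {ffun 'I_n -> 'I_n}) :
  park p = Some cyc_outcome <->
  (forall j : 'I_n, first_free (cyc_partial j) (p j) = Some (cyc_spot j)).
Proof.
have := park_aux_cyc p (leq0n n); rewrite drop0 cyc_partial0 => ->.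
by split=> spots j //; apply: spots.
Qed.

End CyclicOutcome.

Definition cycPF_disp n (a : {ffun 'I_n -> nat}) :=
  [set p : {ffun 'I_n -> 'I_n} | cycPF p && [forall i, disp p i == a i]].

Section PrescribedDisplacement.
Variables (n : nat) (a : {ffun 'I_n -> nat}).
Hypothesis a_invseq : is_invseq a.

Definition admissible_shift (s : 'I_n) :=
  [forall c : 'I_n, (s <= c) ==> (a c + s <= c)].

Lemma admissible_shift0 (o : 'I_n) : o = 0 :> nat -> admissible_shift o.
Proof. by move=> o0; apply/forallP => c; rewrite o0 addn0 a_invseq implybT. Qed.

Lemma cyc_pref_lt (s c : 'I_n) : cyc_spot n s c - a c < n.
Proof. exact: leq_ltn_trans (leq_subr _ _) (cyc_spot_lt (ltn_ord s) (ltn_ord c)). Qed.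

(* The only candidate with outcome rotated by s and displacement a. *)
Definition cyc_prefs (s : 'I_n) : {ffun 'I_n -> 'I_n} :=
  [ffun c => Ordinal (cyc_pref_lt s c)].

Section AdmissibleShift.
Variable s : 'I_n.
Hypothesis adm_s : admissible_shift s.

Lemma a_le_cyc_spot (c : 'I_n) : a c <= cyc_spot n s c.
Proof.
move/forallP/(_ c)/implyP: adm_s; have [sn cn] := (ltn_ord s, ltn_ord c).
by move: (a_invseq c); rewrite cyc_spotE //; case: ifP; lia.
Qed.

Lemma cyc_window_taken (c : 'I_n) k :
  cyc_spot n s c - a c <= k < cyc_spot n s c -> (k + s) %% n < c.
Proof.
move/forallP/(_ c)/implyP: adm_s; have [sn cn] := (ltn_ord s, ltn_ord c).
move: (a_invseq c) (cyc_spot_lt sn cn); rewrite cyc_spotE // => ac spot_lt adm_c.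
case/andP=> lo hi; rewrite modn_double; last by move: lo hi spot_lt; case: ifP; lia.
by move: lo hi spot_lt adm_c; case: ifP; case: ifP; lia.
Qed.

Lemma park_cyc_prefs : park (cyc_prefs s) = Some (cyc_outcome n s).
Proof.
apply/park_cycE => // c; have spot_c := cyc_spot_lt (ltn_ord s) (ltn_ord c).
apply: first_free_eq_Some; rewrite ?size_cyc_partial ?ffunE ?leq_subr //=.
- rewrite nth_cyc_partial //.
  by move: (eq_cyc_spot (ltn_ord s) (ltn_ord c) spot_c); rewrite eqxx => /eqP ->; rewrite ltnn.
- move=> k window; rewrite nth_cyc_partial; last by case/andP: window => _ /ltn_trans->.
  by rewrite (cyc_window_taken window).
Qed.

Lemma cyc_prefs_cycPF_disp : cyc_prefs s \in cycPF_disp a.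
Proof.
rewrite inE /cycPF /disp park_cyc_prefs; apply/andP; split.
  by apply/existsP; exists s.
apply/forallP => c; rewrite index_cyc_outcome ?ltn_ord // ffunE /=.
by rewrite subKn ?a_le_cyc_spot.
Qed.

End AdmissibleShift.

Lemma cycPF_dispP p :
  p \in cycPF_disp a -> exists2 s, admissible_shift s & p = cyc_prefs s.
Proof.
rewrite inE /cycPF /disp; case E: (park p) => [occ|] // /andP[/existsP[s /eqP Eocc]].
rewrite {occ}Eocc in E *; move/forallP=> disp_a; exists s.
- apply/forallP => c; apply/implyP => le_sc; move/eqP: (disp_a c).
  by rewrite index_cyc_outcome ?ltn_ord // cyc_spotE ?ltn_ord // le_sc /=; lia.
- have spots := proj1 (park_cycE (ltn_ord s) p) E.
  apply/ffunP => c; apply: val_inj; rewrite ffunE /=.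
  have [_ pref_le _] := first_free_Some (spots c).
  move/eqP: (disp_a c); rewrite index_cyc_outcome ?ltn_ord // => <-.
  by rewrite subKn.
Qed.

Lemma cyc_prefs_inj : {in [set s | admissible_shift s] &, injective cyc_prefs}.
Proof.
move=> s t; rewrite !inE => adm_s adm_t eq_st.
have := park_cyc_prefs adm_t; rewrite -eq_st park_cyc_prefs // => -[].
move/(congr1 (nth None ^~ 0)); have n_gt0 : 0 < n by apply: leq_ltn_trans (ltn_ord s).
by rewrite !nth_cyc_outcome // !add0n !modn_small // => -[] /val_inj.
Qed.

Lemma card_cycPF_disp : #|cycPF_disp a| = #|[set s | admissible_shift s]|.
Proof.
suff -> : cycPF_disp a = cyc_prefs @: [set s | admissible_shift s].
  by rewrite (card_in_imset cyc_prefs_inj).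
apply/setP => p; apply/idP/imsetP => [/cycPF_dispP[s adm_s ->] | [s]].
  by exists s; rewrite ?inE.
by rewrite inE => adm_s ->; apply: cyc_prefs_cycPF_disp.
Qed.

End PrescribedDisplacement.

Section ClosedPrefix.
Variables (n : nat) (sigma : {perm 'I_n}).

Definition prefix_closed (x : 'I_n) :=
  sigma @: [set i : 'I_n | i < x] == [set i : 'I_n | i < x].

Lemma prefix_closed_ltn (x : 'I_n) :
  prefix_closed x -> forall j : 'I_n, (sigma j < x) = (j < x).
Proof.
move/eqP=> closed_x j.
by have := mem_imset [set i : 'I_n | i < x] j (@perm_inj _ sigma); rewrite closed_x !inE.
Qed.

Lemma not_prefix_closed (x : 'I_n) :
  ~~ prefix_closed x -> exists j : 'I_n, (j < x) && (x <= sigma j).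
Proof.
move=> open_x; apply/existsP; apply: contraNT open_x => /existsPn stays_below.
rewrite /prefix_closed eqEcard card_imset ?leqnn ?andbT; last exact: perm_inj.
apply/subsetP => v /imsetP[j]; rewrite !inE => jx ->.
by move: (stays_below j); rewrite jx -ltnNge.
Qed.

Lemma card_perm_ltn (c : 'I_n) : #|[set j : 'I_n | sigma j < c]| = c.
Proof.
have -> : [set j : 'I_n | sigma j < c] = (sigma^-1)%g @: [set v : 'I_n | v < c].
  apply/setP => j; rewrite !inE; apply/idP/imsetP => [lt_jc | [v]].
    by exists (sigma j); rewrite ?inE ?permK.
  by rewrite inE => lt_vc ->; rewrite permKV.
by rewrite card_imset ?card_ord_lt 1?ltnW //; exact: perm_inj.
Qed.

Lemma inv_at_closed_prefix (x c : 'I_n) :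
  prefix_closed x -> x <= c -> inv_at sigma c <= c - x.
Proof.
move=> closed_x le_xc; have below_x := prefix_closed_ltn closed_x.
have le_x_pos : x <= (sigma^-1)%g c by rewrite leqNgt -below_x permKV -leqNgt.
rewrite /inv_at -(card_imset _ (@perm_inj _ sigma)).
set below_c_above_x := [set v : 'I_n | v < c] :\: [set v : 'I_n | v < x].
apply: (@leq_trans #|below_c_above_x|); first apply: subset_leq_card.
  apply/subsetP => v /imsetP[j]; rewrite !inE => /andP[lt_pos lt_c] ->.
  by rewrite lt_c below_x -leqNgt (leq_trans le_x_pos (ltnW lt_pos)).
rewrite cardsDS; last by apply/subsetP => v; rewrite !inE => /leq_trans->.
by rewrite !card_ord_lt // ltnW // (leq_ltn_trans le_xc).
Qed.

(* Every value below sigma q at a position after q is counted, and the values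
   below sigma q fill sigma q positions, q of which come before q. *)
Lemma inv_at_prefix_below (q : 'I_n) :
  (forall j : 'I_n, j < q -> sigma j < sigma q) -> inv_at sigma (sigma q) = sigma q - q.
Proof.
move=> before_q; rewrite /inv_at permK.
have := cardsID [set j : 'I_n | j < q] [set j : 'I_n | sigma j < sigma q].
rewrite card_perm_ltn setDE.
have -> : [set j : 'I_n | sigma j < sigma q] :&: [set j : 'I_n | j < q] =
          [set j : 'I_n | j < q].
  by apply/setP => j; rewrite !inE andb_idl // => /before_q.
have -> : [set j : 'I_n | sigma j < sigma q] :&: ~: [set j : 'I_n | j < q] =
          [set j : 'I_n | q < j & sigma j < sigma q].
  apply/setP => j; rewrite !inE -leqNgt andbC; case: (ltngtP q j) => // eq_qj.
  by rewrite (_ : j = q) ?ltnn //; apply: val_inj.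
by rewrite card_ord_lt 1?ltnW //; lia.
Qed.

Lemma admissible_shift_InvSeq (x : 'I_n) :
  admissible_shift (InvSeq sigma) x = prefix_closed x.
Proof.
apply/idP/idP=> [|closed_x]; last first.
  apply/forallP => c; apply/implyP => le_xc; rewrite ffunE.
  by have := inv_at_closed_prefix closed_x le_xc; lia.
apply: contraTT => /not_prefix_closed[j0 crosses_j0].
have [q /andP[lt_qx le_x_sq] q_min] :=
  @arg_minnP _ j0 (fun j : 'I_n => (j < x) && (x <= sigma j)) val crosses_j0.
have before_q (j : 'I_n) : j < q -> sigma j < sigma q.
  move=> lt_jq; apply: leq_trans le_x_sq; rewrite ltnNge; apply/negP => le_x_sj.
  by have := q_min j; rewrite le_x_sj (ltn_trans lt_jq lt_qx) leqNgt lt_jq => /(_ isT).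
apply/forallPn; exists (sigma q); rewrite negb_imply le_x_sq ffunE.
by rewrite inv_at_prefix_below //; lia.
Qed.

End ClosedPrefix.

Lemma closed_block_to_end n (sigma : {perm 'I_n.+1}) (x : 'I_n.+1) :
  prefix_closed sigma x -> closed_block sigma x (@ord_max n).
Proof.
move=> closed_x; rewrite /closed_block -ltnS ltn_ord /= eqEcard.
rewrite card_imset ?leqnn ?andbT; last exact: perm_inj.
apply/subsetP => v /imsetP[i]; rewrite !inE => /andP[le_xi _] ->.
by rewrite leq_ord andbT leqNgt (prefix_closed_ltn closed_x) -leqNgt.
Qed.

(* A component x..y is determined by its start x, which must be the end of a
   closed prefix; conversely y is the least k with x..k closed. *)
Lemma ncomponents_prefix_closed n (sigma : {perm 'I_n}) :
  ncomponents sigma = #|[set x | prefix_closed sigma x]|.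
Proof.
case: n sigma => [|n] sigma; first by rewrite /ncomponents !eq_card0 // => [[] | [[]]].
set C := [set xy : 'I_n.+1 * 'I_n.+1 | component sigma xy.1 xy.2].
have fst_inj : {in C &, injective fst}.
  move=> [x y1] [x' y2]; rewrite !inE /= => /and3P[cb1 _ min1] /and3P[cb2 _ min2].
  move=> /= eq_x; subst x'; congr pair; case: (ltngtP y1 y2) => [lt12 | lt21 | /val_inj //].
  - by move: (forallP min2 y1); rewrite lt12 andbT cb1; case/andP: cb1 => ->.
  - by move: (forallP min1 y2); rewrite lt21 andbT cb2; case/andP: cb2 => ->.
suff -> : [set x | prefix_closed sigma x] = fst @: C by rewrite card_in_imset.
apply/setP => x; rewrite inE; apply/idP/imsetP => [closed_x | [[x' y]]]; last first.
  by rewrite inE => /and3P[_ closed_x _] ->.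
have [y cb_y y_min] := @arg_minnP _ ord_max (closed_block sigma x) val
  (closed_block_to_end closed_x).
exists (x, y) => //; rewrite inE /component /= cb_y (eqP closed_x) eqxx /=.
apply/forallP => k; apply/implyP => /andP[_ lt_ky]; apply/negP => cb_k.
by have := y_min k cb_k; rewrite leqNgt lt_ky.
Qed.

Theorem mainTheorem14 (n : nat) (a : {ffun 'I_n -> nat}) (sigma : {perm 'I_n}) :
  is_invseq a -> InvSeq sigma = a ->
  #|[set p : {ffun 'I_n -> 'I_n} | cycPF p && [forall i, disp p i == a i]]|
    = ncomponents sigma
  /\ (0 < n -> 0 < #|[set p : {ffun 'I_n -> 'I_n} |
                        cycPF p && [forall i, disp p i == a i]]|).
Proof.
move=> a_invseq InvSeq_sigma.
have -> := card_cycPF_disp a_invseq.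
have -> : [set s | admissible_shift a s] = [set x | prefix_closed sigma x].
  by apply/setP => x; rewrite !inE -InvSeq_sigma admissible_shift_InvSeq.
split; first by rewrite ncomponents_prefix_closed.
move=> n_gt0; apply/card_gt0P; exists (Ordinal n_gt0).
by rewrite inE -admissible_shift_InvSeq InvSeq_sigma admissible_shift0.
Qed.
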